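(* Let $f:\mathcal X\times\mathcal Y\to\{0,1\}$, let $\mu$ be a product distribution on $\mathcal X\times\mathcal Y$, let $\epsilon,\delta\in(0,1)$ and $D>0$ with $\mathrm{srec}^{0,\mu}_{\epsilon,\delta}(f)\le D$. Then for every $\rho\in(0,1)$ there is a rectangle $S$ with $\mu_1(S)\le\rho\,\mu_0(S)$ and $$\mu(S)\ge\mu_0(S)\ge\frac1D\left((1-\epsilon)\mu_0-\frac{\delta}{\rho}\mu_1\right).$$
   Context: A rectangle is $A\times B$ with $A\subseteq\mathcal X,B\subseteq\mathcal Y$; $\mu$ product means $\mu(x,y)=\mu_X(x)\mu_Y(y)$. $\mu_z(R)=\mu(R\cap f^{-1}(z))$, $\mu_z=\mu_z(\mathcal X\times\mathcal Y)$. $\mathrm{srec}^{z,\mu}_{\epsilon,\delta}(f)$ is the optimal value of: minimize $\sum_R w_R$ over $w_R\ge0$ (one per rectangle) subject to $\sum_{(x,y)\in f^{-1}(z)}\mu(x,y)\sum_{R\ni(x,y)}w_R\ge(1-\epsilon)\mu_z$; $\sum_{R\ni(x,y)}w_R\le\delta$ for all $(x,y)\notin f^{-1}(z)$; $\sum_{R\ni(x,y)}w_R\le1$ for all $(x,y)$. *)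

From HB Require Import structures.
From mathcomp Require Import all_boot all_order all_algebra.
Set Implicit Arguments. Unset Strict Implicit. Unset Printing Implicit Defensive.
Import Order.TTheory GRing.Theory Num.Theory.
Local Open Scope ring_scope.

Section Defs.
Variables (R : realFieldType) (X Y : finType).

Definition is_distr (T : finType) (p : T -> R) : Prop :=
  (forall t, 0 <= p t) /\ \sum_(t : T) p t = 1.

Definition prod_distr (muX : X -> R) (muY : Y -> R) : X * Y -> R :=
  fun xy => muX xy.1 * muY xy.2.

Definition rect (A : {set X}) (B : {set Y}) : {set X * Y} := setX A B.

Definition meas (mu : X * Y -> R) (S : {set X * Y}) : R :=
  \sum_(p in S) mu p.

Definition meas_z (f : X -> Y -> bool) (z : bool) (mu : X * Y -> R)
    (S : {set X * Y}) : R :=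
  \sum_(p in S | f p.1 p.2 == z) mu p.

Definition cover (w : {set X} -> {set Y} -> R) (x : X) (y : Y) : R :=
  \sum_(A : {set X}) \sum_(B : {set Y} | (x \in A) && (y \in B)) w A B.

Definition srec_feasible (f : X -> Y -> bool) (z : bool) (mu : X * Y -> R)
    (eps delta : R) (w : {set X} -> {set Y} -> R) : Prop :=
  [/\ forall A B, 0 <= w A B,
      \sum_(p : X * Y | f p.1 p.2 == z) mu p * cover w p.1 p.2
        >= (1 - eps) * meas_z f z mu setT,
      forall x y, f x y != z -> cover w x y <= delta
    & forall x y, cover w x y <= 1].

Definition srec_value (w : {set X} -> {set Y} -> R) : R :=
  \sum_(A : {set X}) \sum_(B : {set Y}) w A B.

(* srec^{z,mu}_{eps,delta}(f) <= D, where srec is the optimal value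
   (infimum) of the LP: for every D' > D there is a feasible w of value <= D'. *)
Definition srec_le (f : X -> Y -> bool) (z : bool) (mu : X * Y -> R)
    (eps delta D : R) : Prop :=
  forall D', D < D' ->
    exists w, srec_feasible f z mu eps delta w /\ srec_value w <= D'.
End Defs.

(* Weigh the "gain" mu_0(R) - mu_1(R)/rho of each rectangle R by an almost optimal
   solution w of the LP.  Feasibility gives sum_R w_R gain(R) >= (1-eps) mu_0 - (delta/rho) mu_1,
   while sum_R w_R <= D' for any D' > D, so a rectangle S of maximal gain has
   D * gain(S) >= (1-eps) mu_0 - (delta/rho) mu_1.  Since the empty rectangle has gain 0,
   gain(S) >= 0, i.e. mu_1(S) <= rho mu_0(S), and mu_0(S) >= gain(S). *)
From Pilot Require Import Defs.
From HB Require Import structures.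
From mathcomp Require Import all_boot all_order all_algebra.
From mathcomp Require Import lra ring.
Set Implicit Arguments. Unset Strict Implicit. Unset Printing Implicit Defensive.
Import Order.TTheory GRing.Theory Num.Theory.
Local Open Scope ring_scope.

Lemma ler_wmul_of_forall_gt (R : realFieldType) (T M D : R) :
  0 <= M -> (forall D', D < D' -> T <= M * D') -> T <= M * D.
Proof.
move=> M_ge0 hT; apply/ler_addgt0Pr => e e_gt0.
have [M0|M_neq0] := eqVneq M 0.
  have := hT (D + 1); rewrite ltrDl ltr01 M0 mul0r => /(_ isT) T_le0.
  by rewrite mul0r add0r (le_trans T_le0) // ltW.
have M_gt0 : 0 < M by rewrite lt_def M_neq0.
have := hT (D + e / M); rewrite ltrDl divr_gt0 // => /(_ isT).
by rewrite mulrDr mulrCA divff // mulr1.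
Qed.

Lemma weighted_sum_le_max (R : numDomainType) (I J : finType)
    (w g : I -> J -> R) (M : R) :
  (forall i j, 0 <= w i j) -> (forall i j, g i j <= M) ->
  \sum_i \sum_j w i j * g i j <= M * \sum_i \sum_j w i j.
Proof.
move=> w_ge0 g_le; rewrite mulr_sumr; apply: ler_sum => i _.
by rewrite mulr_sumr; apply: ler_sum => j _; rewrite mulrC ler_wpM2r.
Qed.

Section RectangleLP.
Variables (R : realFieldType) (X Y : finType) (f : X -> Y -> bool) (mu : X * Y -> R).

Lemma sum_cover_meas_z (z : bool) (w : {set X} -> {set Y} -> R) :
  \sum_(p : X * Y | f p.1 p.2 == z) mu p * Defs.cover w p.1 p.2 =
  \sum_(A : {set X}) \sum_(B : {set Y}) w A B * meas_z f z mu (rect A B).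
Proof.
pose F (p : X * Y) (A : {set X}) (B : {set Y}) :=
  if [&& f p.1 p.2 == z, p.1 \in A & p.2 \in B] then mu p * w A B else 0.
transitivity (\sum_p \sum_A \sum_B F p A B).
  rewrite big_mkcond; apply: eq_bigr => p _; rewrite /Defs.cover /F.
  case: ifP => hz /=; last by rewrite big1 // => A _; rewrite big1.
  rewrite mulr_sumr; apply: eq_bigr => A _; rewrite mulr_sumr big_mkcond.
  by apply: eq_bigr => B _; case: ifP; rewrite ?mulr0.
rewrite exchange_big; apply: eq_bigr => A _; rewrite exchange_big.
apply: eq_bigr => B _; rewrite /meas_z mulr_sumr [RHS]big_mkcond.
apply: eq_bigr => -[x y] _; rewrite /F /rect in_setX /=.
by case: (f x y == z); case: (x \in A); case: (y \in B); rewrite ?mulr0 // mulrC.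
Qed.

Hypothesis mu_ge0 : forall p, 0 <= mu p.

Lemma meas_z_le_meas (z : bool) (S : {set X * Y}) : meas_z f z mu S <= meas mu S.
Proof.
rewrite /meas_z /meas big_mkcondr /=.
by apply: ler_sum => p _; case: ifP.
Qed.

Lemma sum_cover_le (z : bool) (w : {set X} -> {set Y} -> R) (c : R) :
  (forall x y, f x y == z -> Defs.cover w x y <= c) ->
  \sum_(p : X * Y | f p.1 p.2 == z) mu p * Defs.cover w p.1 p.2
    <= c * meas_z f z mu setT.
Proof.
move=> cover_le; rewrite /meas_z mulr_sumr.
rewrite [leRHS](eq_bigl (fun p => f p.1 p.2 == z)) => [|p]; last by rewrite inE.
by apply: ler_sum => p fp; rewrite mulrC ler_wpM2r // cover_le.
Qed.

Definition rect_gain (rho : R) (A : {set X}) (B : {set Y}) : R :=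
  meas_z f false mu (rect A B) - rho^-1 * meas_z f true mu (rect A B).

Lemma rect_gain0 (rho : R) : rect_gain rho set0 set0 = 0.
Proof.
rewrite /rect_gain /meas_z !big1 ?mulr0 ?subr0 // => p; by rewrite !inE.
Qed.

Lemma srec_feasible_gain_ge (eps delta rho : R) (w : {set X} -> {set Y} -> R) :
  0 < rho -> srec_feasible f false mu eps delta w ->
  (1 - eps) * meas_z f false mu setT - delta / rho * meas_z f true mu setT
    <= \sum_A \sum_B w A B * rect_gain rho A B.
Proof.
move=> rho_gt0 [_ cover0_ge cover1_le _].
have cover1 : \sum_(p : X * Y | f p.1 p.2 == true) mu p * Defs.cover w p.1 p.2
    <= delta * meas_z f true mu setT.
  by apply: sum_cover_le => x y /eqP fxy; apply: cover1_le; rewrite fxy.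
rewrite !sum_cover_meas_z in cover0_ge cover1.
have -> : \sum_A \sum_B w A B * rect_gain rho A B =
    \sum_A \sum_B w A B * meas_z f false mu (rect A B)
    - rho^-1 * \sum_A \sum_B w A B * meas_z f true mu (rect A B).
  rewrite mulr_sumr -sumrB; apply: eq_bigr => A _.
  by rewrite mulr_sumr -sumrB; apply: eq_bigr => B _; rewrite /rect_gain; ring.
have rhoV_ge0 : 0 <= rho^-1 by rewrite invr_ge0 ltW.
have := ler_wpM2l rhoV_ge0 cover1.
by rewrite mulrA (mulrC rho^-1); lra.
Qed.

End RectangleLP.

Theorem mainTheorem5 (R : realFieldType) (X Y : finType)
    (f : X -> Y -> bool) (muX : X -> R) (muY : Y -> R)
    (eps delta D : R) :
  is_distr muX -> is_distr muY ->
  0 < eps < 1 -> 0 < delta < 1 -> 0 < D ->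
  srec_le f false (prod_distr muX muY) eps delta D ->
  forall rho : R, 0 < rho < 1 ->
  exists (A : {set X}) (B : {set Y}),
    let mu := prod_distr muX muY in
    let S := rect A B in
    meas_z f true mu S <= rho * meas_z f false mu S /\
    meas_z f false mu S <= meas mu S /\
    D^-1 * ((1 - eps) * meas_z f false mu setT
            - delta / rho * meas_z f true mu setT)
      <= meas_z f false mu S.
Proof.
move=> [muX_ge0 _] [muY_ge0 _] _ _ D_gt0 hsrec rho /andP[rho_gt0 _].
set mu := prod_distr muX muY.
have mu_ge0 p : 0 <= mu p by apply: mulr_ge0.
pose gain (S : {set X} * {set Y}) := rect_gain f mu rho S.1 S.2.
have [[A B] _ gain_max] := @arg_maxP _ R _ (set0, set0) xpredT gain isT.
have gain_ge0 : 0 <= gain (A, B).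
  by have := gain_max (set0, set0) isT; rewrite /gain rect_gain0.
have gain_ge : (1 - eps) * meas_z f false mu setT
    - delta / rho * meas_z f true mu setT <= gain (A, B) * D.
  apply: ler_wmul_of_forall_gt => // D' /hsrec [w [w_feas w_val]].
  apply: le_trans (srec_feasible_gain_ge mu_ge0 rho_gt0 w_feas) _.
  apply: le_trans (weighted_sum_le_max _ (fun A' B' => gain_max (A', B') isT)) _.
    by case: w_feas.
  exact: ler_wpM2l.
exists A, B => /=; split; [|split].
- by move: gain_ge0; rewrite /gain /rect_gain /= subr_ge0 ler_pdivrMl.
- exact: meas_z_le_meas.
- rewrite ler_pdivrMl // (mulrC D); apply: le_trans gain_ge _.
  apply: ler_wpM2r; first exact: ltW.
  by rewrite /gain /rect_gain /= gerBl mulr_ge0 ?sumr_ge0 // invr_ge0 ltW.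
Qed.
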